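(* Every Extended Bassian group is relatively Hopfian; that is, $\mathcal{EB}\subseteq\mathcal{RH}$.
   Context: All groups are abelian. A group $G$ is Bassian if there is no nonzero subgroup $H\le G$ with an injective homomorphism $G\to G/H$. A group $G$ is Extended Bassian ($G\in\mathcal{EB}$) if $G=B\oplus D$ where $B$ is Bassian and $D=\bigoplus_{p\ \text{prime}}\mathbb{Z}(p^\infty)^{(n_p)}$ with every $n_p$ finite ($\mathbb{Z}(p^\infty)$ the quasi-cyclic $p$-group, $A^{(n)}$ the direct sum of $n$ copies of $A$). A group $G$ is relatively Hopfian ($G\in\mathcal{RH}$) if $G$ is not isomorphic to a proper direct summand of any of its proper quotients, i.e., there is no nonzero subgroup $H\le G$ with $G/H=A\oplus C$, $C\neq0$ and $A\cong G$. *)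

From HB Require Import structures.
From mathcomp Require Import all_boot all_order all_algebra.
Set Implicit Arguments. Unset Strict Implicit. Unset Printing Implicit Defensive.
Import Order.TTheory GRing.Theory Num.Theory.
Local Open Scope ring_scope.

(* A quotient G/H is represented (up to isomorphism) by a
   zmodType Q together with a surjective homomorphism pi : G -> Q whose kernel
   is H (first isomorphism theorem). *)

Definition Bassian (G : zmodType) : Prop :=
  forall (Q : zmodType) (pi f : {additive G -> Q}),
    (forall q : Q, exists x : G, pi x = q) ->
    injective f ->
    forall x : G, pi x = 0 -> x = 0.

(* q is in Z[1/p], i.e. its reduced denominator is a power of p. *)
Definition padic_rat (p : nat) (q : rat) : Prop :=
  exists k : nat, denq q = (p ^ k)%N%:Z.

(* The domain F = \bigoplus_{p prime} (Z[1/p])^(n_p), coordinates indexed by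
   (p, i) with p prime and i < n p, finitely supported. *)
Definition Fdom (n : nat -> nat) (u : nat -> nat -> rat) : Prop :=
  [/\ (forall p i, padic_rat p (u p i)),
      (forall p i, (~~ prime p \/ (n p <= i)%N) -> u p i = 0)
    & exists N : nat, forall p i, (N <= p)%N -> u p i = 0].

Definition Fadd (u v : nat -> nat -> rat) : nat -> nat -> rat :=
  fun p i => u p i + v p i.

(* D is isomorphic to \bigoplus_p Z(p^oo)^(n_p) (every n_p finite), realised as
   F / K where K = \bigoplus_p Z^(n_p) (integer coordinates): there is a
   surjective homomorphism F -> D with kernel K. Note Z(p^oo) = Z[1/p]/Z. *)
Definition StdDivisible (D : zmodType) : Prop :=
  exists (n : nat -> nat) (pi : (nat -> nat -> rat) -> D),
    [/\ (forall u v, Fdom n u -> Fdom n v -> pi (Fadd u v) = pi u + pi v),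
        (forall d : D, exists u, Fdom n u /\ pi u = d)
      & (forall u, Fdom n u -> (pi u = 0 <-> forall p i, denq (u p i) = 1))].

Definition ExtBassian (G : zmodType) : Prop :=
  exists (B D : zmodType) (phi : {additive G -> (B * D)%type}),
    [/\ bijective phi, Bassian B & StdDivisible D].

(* Relatively Hopfian: there is no nonzero H <= G with G/H = A (+) C,
   C <> 0, A ~= G.  Here G/H is Q (via pi, H = ker pi), A is the image of an
   injective homomorphism f : G -> Q, and C is a subgroup of Q with
   Q = A (+) C internally. *)
Definition RelHopfian (G : zmodType) : Prop :=
  forall (Q : zmodType) (pi f : {additive G -> Q}) (C : {pred Q}),
    (forall q : Q, exists x : G, pi x = q) ->
    injective f ->
    0 \in C -> {in C &, forall a b, a - b \in C} ->
    (exists c, c \in C /\ c <> 0) ->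
    (forall q : Q, exists x c, c \in C /\ q = f x + c) ->
    (forall x : G, f x \in C -> f x = 0) ->
    forall x : G, pi x = 0 -> x = 0.

(* Write G = B (+) D.  Every homomorphism from the divisible torsion group D to
   the Bassian group B vanishes: its image would be a divisible summand of B
   containing an element e of prime order p, and the endomorphism acting as p on
   that summand and as the identity on a complement would be a surjection
   killing e.  Now let G/H = A (+) C with A ~= G.  By the vanishing, the
   composite G -> G/H -> A ~= G -> B induces a surjective, hence injective,
   endomorphism of B; so H lies in D and every element of C lifts to D.  The
   vanishing also puts the copy of D inside A into the image of D in G/H.  As D
   has finite p-ranks, an injective image of D inside a quotient of D is the
   whole quotient, so the image of D lies in A, and C = 0. *)

From HB Require Import structures.
From mathcomp Require Import all_boot all_order all_algebra.
From mathcomp Require Import boolp classical_sets.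
From mathcomp Require Import ring.
Set Implicit Arguments. Unset Strict Implicit. Unset Printing Implicit Defensive.
Import Order.TTheory GRing.Theory Num.Theory.
Local Open Scope ring_scope.

Lemma additiveP (U V : zmodType) (g : U -> V) :
  zmod_morphism g -> {g' : {additive U -> V} | g = g'}.
Proof.
by move=> gB; exists (HB.pack_for {additive U -> V} g (GRing.isZmodMorphism.Build U V g gB)).
Qed.

Definition subgroup (V : zmodType) (X : V -> Prop) :=
  X 0 /\ forall a b, X a -> X b -> X (a - b).

Definition divisible (V : zmodType) (X : V -> Prop) :=
  forall x p, prime p -> X x -> exists2 y, X y & y *+ p = x.

Definition torsion (V : zmodType) :=
  forall v : V, exists2 m, (0 < m)%N & v *+ m = 0.

Section Subgroup.
Variables (V : zmodType) (X : V -> Prop).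
Hypothesis X_subgroup : subgroup X.

Lemma subgroup0 : X 0. Proof. by case: X_subgroup. Qed.

Lemma subgroupB a b : X a -> X b -> X (a - b).
Proof. by case: X_subgroup => _; apply. Qed.

Lemma subgroupN a : X a -> X (- a).
Proof. by rewrite -sub0r; apply/subgroupB/subgroup0. Qed.

Lemma subgroupD a b : X a -> X b -> X (a + b).
Proof. by move=> Xa Xb; rewrite -[b]opprK; apply/subgroupB/subgroupN. Qed.

Lemma subgroupMn a n : X a -> X (a *+ n).
Proof.
move=> Xa; elim: n => [|n IH]; first by rewrite mulr0n; apply: subgroup0.
by rewrite mulrS; apply: subgroupD.
Qed.

Lemma subgroup_coprime x m n : coprime m n ->
  X (x *+ m) -> X (x *+ n) -> X x.
Proof.
case: m => [|m] cmn Xm Xn; first by move: cmn Xn; rewrite /coprime gcd0n => /eqP->.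
case: (egcdnP n (ltn0Sn m)) => km kn kE _; move: kE; rewrite (eqP cmn) => kE.
have := subgroupB (subgroupMn km Xm) (subgroupMn kn Xn).
by rewrite -!mulrnA mulnC kE mulrnDr mulr1n addrAC mulnC subrr add0r.
Qed.

End Subgroup.

Lemma mulrn_prime_descent (V : zmodType) (P : V -> Prop) :
  (forall x p, prime p -> P (x *+ p) -> P x) ->
  forall m x, (0 < m)%N -> P (x *+ m) -> P x.
Proof.
move=> Pp; elim/ltn_ind=> m IH x m0 Pm.
case: (leqP m 1) => [m1|m1]; first by move: Pm; rewrite (@anti_leq m 1) ?m1.
have p_dvd_m := pdiv_dvd m; have p_pr := pdiv_prime m1.
apply: (IH (m %/ pdiv m)%N); first by rewrite ltn_Pdiv ?prime_gt1 // ltnW.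
  by rewrite divn_gt0 ?prime_gt0 // dvdn_leq // ltnW.
by apply: (Pp _ _ p_pr); rewrite -mulrnA divnK.
Qed.

Section DirectSum.
Variables (V : zmodType) (X Y : V -> Prop).
Hypotheses (X_subgroup : subgroup X) (Y_subgroup : subgroup Y).
Hypothesis XY_disjoint : forall v, X v -> Y v -> v = 0.
Hypothesis XY_span : forall v, exists x y, [/\ X x, Y y & v = x + y].

Lemma direct_sum_uniq x1 x2 y1 y2 : X x1 -> X x2 -> Y y1 -> Y y2 ->
  x1 + y1 = x2 + y2 -> x1 = x2.
Proof.
move=> X1 X2 Y1 Y2 e; apply: subr0_eq; apply: XY_disjoint; first exact: subgroupB.
have -> : x1 - x2 = y2 - y1 by rewrite -[x1](addrK y1) e addrAC (addrAC x2) subrr add0r.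
exact: subgroupB.
Qed.

Lemma direct_sum_projection : exists rho : {additive V -> V},
  [/\ forall v, X (rho v), forall x, X x -> rho x = x & forall y, Y y -> rho y = 0].
Proof.
have decP v : exists x, X x /\ exists2 y, Y y & v = x + y.
  by have [x [y [Xx Yy ->]]] := XY_span v; exists x; split => //; exists y.
pose rho v := projT1 (cid (decP v)).
have [rhoX rhoY] : (forall v, X (rho v)) /\ forall v, exists2 y, Y y & v = rho v + y.
  by split=> v; case: (projT2 (cid (decP v))).
have rhoE x y : X x -> Y y -> rho (x + y) = x.
  move=> Xx Yy; have [y' Yy' e] := rhoY (x + y).
  by apply: (direct_sum_uniq _ Xx Yy' Yy); rewrite ?rhoX // -e.
have rhoB : zmod_morphism rho.
  move=> a b; have [ya Ya {1}->] := rhoY a; have [yb Yb {1}->] := rhoY b.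
  rewrite opprD addrACA rhoE //; first exact: subgroupB (rhoX a) (rhoX b).
  exact: subgroupB.
have [rho' rhoE'] := additiveP rhoB; exists rho'; rewrite -rhoE'; split => //.
  by move=> x Xx; rewrite -{1}[x]addr0 rhoE //; apply: subgroup0 Y_subgroup.
by move=> y Yy; rewrite -{1}[y]add0r rhoE //; apply: subgroup0 X_subgroup.
Qed.

End DirectSum.

Lemma complement_retraction (U V : zmodType) (f : {additive U -> V}) (C : {pred V}) :
  injective f -> 0 \in C -> {in C &, forall a b, a - b \in C} ->
  (forall v, exists x c, c \in C /\ v = f x + c) ->
  (forall x, f x \in C -> f x = 0) ->
  exists r : {additive V -> U}, cancel f r /\ {in C, forall c, r c = 0}.
Proof.
move=> finj C0 CB dec dir.
pose X v := exists x, v = f x.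
have X_subgroup : subgroup X.
  by split=> [|_ _ [x ->] [y ->]]; [exists 0 | exists (x - y)]; rewrite ?raddfB ?raddf0.
have span v : exists x c, [/\ X x, c \in C & v = x + c].
  by have [x [c [cC ->]]] := dec v; exists (f x), c; split => //; exists x.
have disj v : X v -> v \in C -> v = 0 by move=> [x ->]; apply: dir.
have [rho [rhoX rhoXid rhoC]] :=
  direct_sum_projection X_subgroup (conj C0 CB) disj span.
pose r v := projT1 (cid (rhoX v)).
have rE v : rho v = f (r v) := projT2 (cid (rhoX v)).
have rB : zmod_morphism r by move=> a b; apply: finj; rewrite raddfB -!rE raddfB.
have [r' rE'] := additiveP rB; exists r'; rewrite -rE'; split.
  by move=> x; apply: finj; rewrite -rE rhoXid //; exists x.
by move=> c cC; apply: finj; rewrite -rE rhoC // raddf0.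
Qed.

Section DivisibleSummand.
Variables (B : zmodType) (S : B -> Prop).
Hypotheses (S_subgroup : subgroup S) (S_divisible : divisible S).
Local Open Scope classical_set_scope.

Lemma maximal_disjoint_subgroup : exists A : B -> Prop,
  [/\ subgroup A, forall a, A a -> S a -> a = 0 &
      forall x, ~ A x -> exists a k, [/\ A a, S (a + x *+ k) & a + x *+ k <> 0]].
Proof.
pose P (X : set B) := (forall a b, X a -> X b -> X (a - b)) /\
  (forall a, X a -> S a -> a = 0).
have P_chain (F : set (set B)) : F `<=` P -> total_on F subset ->
    P (\bigcup_(X in F) X).
  move=> FP Ftot; split; last by move=> a [X FX Xa]; apply: (FP X FX).2.
  move=> a b [X FX Xa] [Y FY Yb].
  have [XY|YX] := Ftot X Y FX FY.
  - by exists Y => //; apply: (FP Y FY).1 => //; apply: XY.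
  - by exists X => //; apply: (FP X FX).1 => //; apply: YX.
have [A [[AB Adisj] Amax]] := Zorn_bigcup P_chain.
have A0 : A 0.
  have [[a Aa]|nA] := pselect (exists a, A a); first by rewrite -(subrr a); apply: AB.
  exfalso; apply: (Amax [set 0]).
  - by split=> [a Aa|/(_ 0 erefl) A0]; case: nA; [exists a | exists 0].
  - by split=> [a b -> ->|a ->]; rewrite ?subrr.
exists A; split=> // x nAx; apply: contrapT => noext.
pose Ax y := exists a k, A a /\ y = a + x *~ k.
apply: (Amax Ax).
- split; first by move=> y Ay; exists y, 0; rewrite mulr0z addr0.
  by move=> AxA; apply: nAx; apply: AxA; exists 0, 1; rewrite add0r.
split=> [_ _ [a1 [k1 [A1 ->]]] [a2 [k2 [A2 ->]]]|_ [a [k [Aa ->]]] Sy].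
  by exists (a1 - a2), (k1 - k2); rewrite mulrzBr opprD addrACA; split=> //; apply: AB.
apply: contrapT => y0; apply: noext.
case: k Sy y0 => m Sy y0; first by exists a, m; rewrite pmulrn.
rewrite NegzE mulrNz -pmulrn in Sy y0.
exists (- a), m.+1; rewrite addrC -opprB; split.
- by rewrite -sub0r; apply: AB.
- exact: subgroupN.
- by move=> /eqP; rewrite oppr_eq0 => /eqP.
Qed.

Section Complement.
Variable A : B -> Prop.
Hypotheses (A_subgroup : subgroup A) (A_disjoint : forall a, A a -> S a -> a = 0).
Hypothesis A_maximal :
  forall x, ~ A x -> exists a k, [/\ A a, S (a + x *+ k) & a + x *+ k <> 0].

Let T x := exists s a, [/\ S s, A a & x = s + a].

Let T_subgroup : subgroup T.
Proof.
split; first by exists 0, 0; rewrite addr0; split=> //; apply: subgroup0.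
move=> _ _ [s1 [a1 [S1 A1 ->]]] [s2 [a2 [S2 A2 ->]]].
exists (s1 - s2), (a1 - a2); rewrite opprD addrACA.
by split=> //; apply: subgroupB.
Qed.

Let TS s : S s -> T s.
Proof. by exists s, 0; rewrite addr0; split=> //; apply: subgroup0. Qed.

Let TA a : A a -> T a.
Proof. by exists 0, a; rewrite add0r; split=> //; apply: subgroup0. Qed.

Let TSA s a : S s -> A a -> T (s - a).
Proof. by move=> Ss Aa; apply: subgroupB T_subgroup _ _ (TS Ss) (TA Aa). Qed.

(* Subtracting from [x] a [p]-th root in [S] of the [S]-part of [p x], we may
   assume [p x \in A]; maximality of [A] then puts some [k x] with [p] not
   dividing [k] into [S + A]. *)
Lemma complement_sum_prime x p : prime p -> T (x *+ p) -> T x.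
Proof.
move=> p_pr [s [a [Ss Aa xpE]]].
have [t St tpE] := S_divisible p_pr Ss.
suff Ty : T (x - t) by rewrite -(subrK t x); apply: subgroupD T_subgroup _ _ Ty (TS St).
have Ayp : A ((x - t) *+ p) by rewrite mulrnBl xpE tpE addrC addKr.
have [Ay|nAy] := pselect (A (x - t)); first exact: TA.
have [a' [k [Aa' Sk k0]]] := A_maximal nAy.
move: Sk k0; rewrite (divn_eq k p) mulrnDr mulrnA addrA.
set a'' := a' + _; have Aa'' : A a''.
  by apply: subgroupD => //; rewrite -mulrnA mulnC mulrnA; apply: subgroupMn.
have r_lt : (k %% p < p)%N by rewrite ltn_mod prime_gt0.
case: (posnP (k %% p)) r_lt => [->|r0] r_lt.
  by rewrite mulr0n addr0 => /A_disjoint->.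
move=> Sk _; apply: (subgroup_coprime T_subgroup (_ : coprime (k %% p) p)).
- by rewrite coprime_sym prime_coprime // gtnNdvd.
- by rewrite -(addKr a'' (_ *+ _)) addrC; apply: TSA.
- exact: TA.
Qed.

Lemma complement_sum_full x : T x.
Proof.
have [Ax|nAx] := pselect (A x); first exact: TA.
have [a [k [Aa Sk k0]]] := A_maximal nAx.
have k_gt0 : (0 < k)%N.
  by rewrite lt0n; apply/eqP => k0'; move: Sk k0; rewrite k0' mulr0n addr0 => /A_disjoint->.
apply: (mulrn_prime_descent complement_sum_prime k_gt0).
by rewrite -(addKr a (_ *+ _)) addrC; apply: TSA.
Qed.

End Complement.

Lemma divisible_retraction : exists rho : {additive B -> B},
  (forall b, S (rho b)) /\ (forall s, S s -> rho s = s).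
Proof.
have [A [A_subgroup A_disjoint A_maximal]] := maximal_disjoint_subgroup.
have span := complement_sum_full A_subgroup A_disjoint A_maximal.
have disj v : S v -> A v -> v = 0 by move=> Sv Av; apply: A_disjoint.
have [rho [rhoS rhoSid _]] := direct_sum_projection S_subgroup A_subgroup disj span.
by exists rho.
Qed.

End DivisibleSummand.

Lemma bassian_surj_inj (B : zmodType) (s : {additive B -> B}) : Bassian B ->
  (forall b, exists x, s x = b) -> forall x, s x = 0 -> x = 0.
Proof. by move=> bassB s_surj; apply: (bassB B s idfun). Qed.

(* With [rho] a retraction onto [S], the map [1 + (p - 1) rho] is [p] on [S]
   and the identity on [ker rho]. *)
Lemma bassian_divisible_prime_torsion (B : zmodType) (S : B -> Prop) :
  Bassian B -> subgroup S -> divisible S ->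
  forall e p, prime p -> S e -> e *+ p = 0 -> e = 0.
Proof.
move=> bassB S_subgroup S_divisible e p p_pr Se ep0.
have [rho [rhoS rhoSid]] := divisible_retraction S_subgroup S_divisible.
have epsB : zmod_morphism (fun b => b + rho b *+ p.-1).
  by move=> x y; rewrite raddfB mulrnBl opprD addrACA.
have [eps epsE] := additiveP epsB.
have epsS s : S s -> eps s = s *+ p.
  by move=> Ss; rewrite -epsE /= rhoSid // -mulrS prednK ?prime_gt0.
apply: (bassian_surj_inj bassB) (_ : eps e = 0); last by rewrite epsS.
move=> y; have [t St tpE] := S_divisible _ _ p_pr (rhoS y).
exists (y - rho y + t); rewrite raddfD (epsS _ St) tpE -epsE /=.
by rewrite raddfB (rhoSid _ (rhoS y)) subrr mul0rn addr0 subrK.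
Qed.

Lemma bassian_hom_divisible_torsion (B D : zmodType) (g : {additive D -> B}) :
  Bassian B -> divisible (@setT D) -> torsion D -> forall d, g d = 0.
Proof.
move=> bassB D_divisible D_torsion d.
pose S b := exists x, b = g x.
have S_subgroup : subgroup S.
  by split=> [|_ _ [x ->] [y ->]]; [exists 0 | exists (x - y)]; rewrite ?raddfB ?raddf0.
have S_divisible : divisible S.
  move=> _ p p_pr [x ->]; have [y _ ypE] := D_divisible x p p_pr I.
  by exists (g y); [exists y | rewrite -raddfMn ypE].
have S_p_torsion_free b p : prime p -> S b -> b *+ p = 0 -> b = 0 :=
  @bassian_divisible_prime_torsion _ _ bassB S_subgroup S_divisible b p.
have S_descent b p : prime p -> (S (b *+ p) -> b *+ p = 0) -> S b -> b = 0.
  by move=> p_pr Sbp Sb; apply: (S_p_torsion_free _ _ p_pr Sb (Sbp _)); apply: subgroupMn.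
have [m m_gt0 dm0] := D_torsion d.
apply: (mulrn_prime_descent S_descent m_gt0) (_ : S (g d)); last by exists d.
by rewrite -raddfMn dm0 raddf0.
Qed.

Definition p_independent (V : zmodType) (p : nat) (I : finType) (v : I -> V) :=
  forall a : I -> int, \sum_i v i *~ a i = 0 -> forall i, (p%:Z %| a i)%Z.

Definition finite_p_ranks (V : zmodType) :=
  forall p, prime p -> exists n (e : 'I_n -> V),
    p_independent p e /\ forall v : 'I_n.+1 -> V, ~ p_independent p v.

Lemma mulrz_torsion_dvd (V : zmodType) (v : V) p a :
  v *+ p = 0 -> (p%:Z %| a)%Z -> v *~ a = 0.
Proof. by move=> vp0 /dvdzP[b ->]; rewrite mulrC mulrzA -pmulrn vp0 mul0rz. Qed.

Section ImageOfFiniteRank.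
Variables (D Q : zmodType) (i f : {additive D -> Q}).
Hypotheses (D_divisible : divisible (@setT D)) (D_torsion : torsion D).
Hypothesis D_ranks : finite_p_ranks D.
Hypotheses (f_inj : injective f) (im_f_sub : forall d, exists d', f d = i d').

(* The [n + 1] elements [i w] and [f (e j) = i (d' j)] of [i(D)] are
   [p]-dependent, and the coefficient of [i w] is prime to [p] because the
   [f (e j)] are [p]-independent. *)
Lemma im_socle_sub_im_inj p w : prime p -> i w *+ p = 0 -> exists d, i w = f d.
Proof.
move=> p_pr wp0; have [n [e [e_ind D_rank]]] := D_ranks p_pr.
have [d' d'E] := fin_all_exists (fun j => im_f_sub (e j)).
pose v (k : 'I_n.+1) := if unlift ord0 k is Some j then d' j else w.
have [a rel [k ndvd]] : exists2 a, \sum_k v k *~ a k = 0 & exists k, ~~ (p%:Z %| a k)%Z.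
  apply: contrapT => nrel; apply: (D_rank v) => a rel k; apply: contrapT => ndvd.
  by apply: nrel; exists a => //; exists k; apply/negP.
pose es := \sum_j e j *~ a (lift ord0 j).
have relQ : i w *~ a ord0 + f es = 0.
  rewrite -(raddf0 i) -rel !raddf_sum big_ord_recl /v unlift_none raddfMz.
  by congr (_ + _); apply: eq_bigr => j _; rewrite !raddfMz liftK d'E.
have a0_coprime : coprimez p (a ord0).
  rewrite coprimezE prime_coprime //; apply: contraNN ndvd => dvd_a0.
  have es0 : es = 0.
    by apply: f_inj; rewrite raddf0 -relQ (mulrz_torsion_dvd wp0 dvd_a0) add0r.
  by case: (unliftP ord0 k) => [j ->|->] //; apply: (e_ind (fun j => a (lift ord0 j)) es0).
have [[u1 u2] /= uE] := coprimezP _ _ a0_coprime.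
exists ((- es) *~ u2); rewrite -[i w]mulr1z -uE mulrzDr.
rewrite (mulrz_torsion_dvd wp0 (dvdz_mull _ (dvdzz _))) add0r.
rewrite raddfMz raddfN -mulrzA_C.
by congr (_ *~ _); apply/eqP; rewrite -addr_eq0 relQ.
Qed.

Lemma im_sub_im_of_inj d : exists d', i d = f d'.
Proof.
pose P y := (exists w, y = i w) -> exists d', y = f d'.
have Pp y p : prime p -> P (y *+ p) -> P y.
  move=> p_pr Pyp [w yE]; rewrite yE.
  have [x xE] : exists x, y *+ p = f x by apply: Pyp; exists (w *+ p); rewrite yE raddfMn.
  have [x' _ x'E] := D_divisible p_pr (I : setT x).
  have [x'' x''E] := im_f_sub x'.
  have [y' y'E] : exists d, i (w - x'') = f d.
    apply: im_socle_sub_im_inj p_pr _.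
    by rewrite raddfB mulrnBl -yE xE -x''E -raddfMn x'E subrr.
  by exists (y' + x'); rewrite raddfD -y'E raddfB x''E subrK.
have [m m_gt0 dm0] := D_torsion d.
apply: (mulrn_prime_descent Pp m_gt0) (_ : exists w, i d = i w); last by exists d.
by move=> _; exists 0; rewrite -raddfMn dm0 !raddf0.
Qed.

End ImageOfFiniteRank.

Lemma mulr_den_int (x : rat) m : (`|denq x| %| m)%N -> x * m%:R \is a Num.int.
Proof.
case/dvdnP=> t ->; rewrite natrM mulrCA -[`|denq x|%:R]/((`|denq x|%:Z)%:~R).
by rewrite absz_denq rpredM ?natr_int // -numqE intr_int.
Qed.

Lemma padic_rat_int p x : x \is a Num.int -> padic_rat p x.
Proof. by rewrite Qint_def => /eqP dx; exists 0%N; rewrite dx expn0. Qed.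

Lemma padic_ratP p x : prime p ->
  padic_rat p x <-> exists k, x * (p ^ k)%:R \is a Num.int.
Proof.
move=> p_pr; split=> [[k dk]|[k /intrP[z zE]]].
  by exists k; apply: mulr_den_int; rewrite dk.
have numE : (numq x * (p ^ k)%:Z = z * denq x)%R.
  apply/eqP; rewrite -(eqr_int rat) !intrM numqE -[(p ^ k)%:Z%:~R]/((p ^ k)%:R).
  by rewrite -zE mulrAC.
have : (`|denq x| %| p ^ k)%N.
  rewrite -(@Gauss_dvdr _ `|numq x|); last by rewrite coprime_sym coprime_num_den.
  have := congr1 absz numE; rewrite !abszM /= => ->.
  by rewrite dvdn_mull.
by case/(dvdn_pfactor _ _ p_pr) => e _ De; exists e; rewrite -absz_denq De.
Qed.

Lemma padic_ratD p x y : prime p ->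
  padic_rat p x -> padic_rat p y -> padic_rat p (x + y).
Proof.
move=> p_pr /(padic_ratP _ p_pr)[a ha] /(padic_ratP _ p_pr)[b hb].
apply/(padic_ratP _ p_pr); exists (a + b)%N.
have -> : (x + y) * (p ^ (a + b))%:R =
    x * (p ^ a)%:R * (p ^ b)%:R + y * (p ^ b)%:R * (p ^ a)%:R.
  by rewrite expnD natrM; ring.
by rewrite rpredD // rpredM // natr_int.
Qed.

Lemma padic_ratMz p x (k : int) : prime p -> padic_rat p x -> padic_rat p (k%:~R * x).
Proof.
move=> p_pr /(padic_ratP _ p_pr)[a ha]; apply/(padic_ratP _ p_pr); exists a.
by rewrite -mulrA rpredM // intr_int.
Qed.

Lemma padic_rat_div_prime p q x : prime p -> prime q -> padic_rat q x ->
  exists2 y, padic_rat q y & p%:R * y - x \is a Num.int.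
Proof.
move=> p_pr q_pr x_q; have [<-|qp] := eqVneq q p.
  exists (x / q%:R); last by rewrite mulrC divfK ?pnatr_eq0 -?lt0n ?prime_gt0 // subrr.
  have [k hk] := (padic_ratP _ q_pr).1 x_q; apply/(padic_ratP _ q_pr); exists k.+1.
  by rewrite expnS natrM mulrA divfK // pnatr_eq0 -lt0n prime_gt0.
case: (x_q) => k dk.
have cop : coprime p (q ^ k).
  by rewrite coprimeXr // prime_coprime // dvdn_prime2 // eq_sym.
case: (egcdnP (q ^ k) (prime_gt0 p_pr)) => km kn kE _; move: kE; rewrite (eqP cop) => kE.
exists (km%:Z%:~R * x); first exact: padic_ratMz.
have -> : p%:R * (km%:Z%:~R * x) - x = kn%:R * (x * (q ^ k)%:R) :> rat.
  have : (km * p)%:R = (kn * q ^ k + 1)%:R :> rat by rewrite kE.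
  by rewrite !natrD !natrM -[km%:Z%:~R]/(km%:R) => E; rewrite mulrCA mulrA E; ring.
by rewrite rpredM ?natr_int // mulr_den_int // dk.
Qed.

Lemma int_relation_p_primitive (N M : nat) (X : 'M[rat]_(N, M)) p (a : 'I_N -> int) k0 :
  prime p -> a k0 != 0 -> (forall l, \sum_k (a k)%:~R * X k l = 0) ->
  exists2 a' : 'I_N -> int, (forall l, \sum_k (a' k)%:~R * X k l = 0) &
     exists k, ~~ (p%:Z %| a' k)%Z.
Proof.
move=> p_pr; have [m am] : exists m, (`|a k0| <= m)%N by exists `|a k0|%N.
elim: m a am => [|m IH] a am a0 rel; first by move: a0; rewrite -absz_eq0 -leqn0 am.
have [[k nk]|all_dvd] := pselect (exists k, ~~ (p%:Z %| a k)%Z).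
  by exists a => //; exists k.
have aE k : a k = (a k %/ p)%Z * p.
  by rewrite divzK //; apply: contrapT => /negP nk; apply: all_dvd; exists k.
have q0 : (a k0 %/ p)%Z != 0 by apply: contraNneq a0 => q0; rewrite aE q0 mul0r.
apply: (IH (fun k => a k %/ p)%Z _ q0) => [|l].
  rewrite -ltnS; apply: leq_trans am; rewrite [in X in (_ < X)%N]aE abszM /=.
  by rewrite -{1}[`|_|%N]muln1 ltn_pmul2l ?prime_gt1 // absz_gt0.
have /eqP := rel l.
rewrite (eq_bigr (fun k => ((a k %/ p)%Z)%:~R * X k l * p%:R)); last first.
  by move=> k _; rewrite {1}aE intrM mulrAC.
by rewrite -mulr_suml mulf_eq0 pnatr_eq0 (gtn_eqF (prime_gt0 p_pr)) orbF => /eqP.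
Qed.

Lemma rat_rows_p_dependent (N M : nat) (X : 'M[rat]_(N, M)) p : prime p -> (M < N)%N ->
  exists2 a : 'I_N -> int, (forall l, \sum_k (a k)%:~R * X k l = 0) &
     exists k, ~~ (p%:Z %| a k)%Z.
Proof.
move=> p_pr MN.
have : kermx X != 0.
  by rewrite kermx_eq0 /row_free neq_ltn (leq_ltn_trans (rank_leq_col X) MN).
case/matrix0Pn => i0 [k0 c0].
pose c := row i0 (kermx X).
have cX l : \sum_k c ord0 k * X k l = 0.
  have : c *m X = 0 by rewrite -row_mul mulmx_ker row0.
  by move/(congr1 (fun A : 'M_(1, M) => A ord0 l)); rewrite !mxE.
pose den := (\prod_(k < N) `|denq (c ord0 k)|)%N.
have den0 : (0 < den)%N by apply: prodn_gt0 => k; rewrite absz_gt0 denq_neq0.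
pose a k := numq (c ord0 k * den%:R).
have aE k : (a k)%:~R = c ord0 k * den%:R.
  by rewrite numqK // mulr_den_int // /den (bigD1 k) //= dvdn_mulr.
apply: (@int_relation_p_primitive _ _ X p a k0) => // [|l].
  by rewrite -(intr_eq0 rat) aE mulf_eq0 pnatr_eq0 negb_or -lt0n den0 andbT mxE.
under eq_bigr do rewrite aE mulrAC.
by rewrite -mulr_suml cX mul0r.
Qed.

Definition Fscale (k : int) (u : nat -> nat -> rat) : nat -> nat -> rat :=
  fun p i => k%:~R * u p i.

(* [Fbasis p j] represents [1/p] in the [j]-th copy of [Z(p^oo)]. *)
Definition Fbasis (p j : nat) : nat -> nat -> rat :=
  fun q l => if (q == p) && (l == j) then p%:R^-1 else 0.

Section Model.
Variables (D : zmodType) (n : nat -> nat) (pi : (nat -> nat -> rat) -> D).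
Hypothesis pi_add : forall u v, Fdom n u -> Fdom n v -> pi (Fadd u v) = pi u + pi v.
Hypothesis pi_surj : forall d : D, exists u, Fdom n u /\ pi u = d.
Hypothesis pi_ker : forall u, Fdom n u -> (pi u = 0 <-> forall p i, denq (u p i) = 1).

Lemma Fdom_map2 (h : rat -> rat -> rat) u v : h 0 0 = 0 ->
  (forall p x y, prime p -> padic_rat p x -> padic_rat p y -> padic_rat p (h x y)) ->
  Fdom n u -> Fdom n v -> Fdom n (fun p i => h (u p i) (v p i)).
Proof.
move=> h0 hP [Pu Su [N1 F1]] [Pv Sv [N2 F2]]; split.
- move=> p i; have [p_pr|np] := boolP (prime p); first exact: hP.
  by rewrite Su ?Sv ?h0; [apply: padic_rat_int; rewrite rpred0 | left | left].
- by move=> p i H; rewrite Su // Sv.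
- by exists (maxn N1 N2) => p i; rewrite geq_max => /andP[h1 h2]; rewrite F1 // F2.
Qed.

Lemma Fdom0 : Fdom n (fun _ _ => 0).
Proof. by split=> [p i||]; [apply: padic_rat_int; rewrite rpred0 | | exists 0%N]. Qed.

Lemma FdomD u v : Fdom n u -> Fdom n v -> Fdom n (Fadd u v).
Proof. by apply: Fdom_map2 => [|p x y p_pr]; [rewrite addr0 | apply: padic_ratD]. Qed.

Lemma FdomZ k u : Fdom n u -> Fdom n (Fscale k u).
Proof.
move=> Fu; apply: (Fdom_map2 (h := fun x _ => k%:~R * x) _ _ Fu Fu).
  by rewrite mulr0.
by move=> p x y p_pr /(padic_ratMz k p_pr).
Qed.

Lemma pi_int u : Fdom n u -> (forall p i, u p i \is a Num.int) -> pi u = 0.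
Proof. by move=> Fu uZ; apply/(pi_ker Fu) => p i; apply/eqP; rewrite -Qint_def. Qed.

Lemma pi_Fscale k u : Fdom n u -> pi (Fscale k u) = pi u *~ k.
Proof.
move=> Fu; have FuZ k' := FdomZ k' Fu.
have piMn m : pi (Fscale m%:Z u) = pi u *+ m.
  elim: m => [|m IH].
    by apply: pi_int => // p i; rewrite /Fscale mulr0z mul0r rpred0.
  have -> : Fscale m.+1%:Z u = Fadd u (Fscale m%:Z u).
    apply: funext => p; apply: funext => i.
    by rewrite /Fadd /Fscale -!pmulrn mulrSr mulrDl mul1r addrC.
  by rewrite pi_add // IH mulrS.
case: k => m; first by rewrite piMn pmulrn.
have : pi (Fscale (Negz m) u) + pi (Fscale m.+1%:Z u) = 0.
  rewrite -pi_add //; apply: pi_int => [|p i]; first exact: FdomD.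
  by rewrite /Fadd /Fscale -mulrDl NegzE intrN addNr mul0r rpred0.
by rewrite piMn NegzE mulrNz -pmulrn => /eqP; rewrite addr_eq0 => /eqP.
Qed.

Lemma pi_eq_int u v : Fdom n u -> Fdom n v ->
  (forall p i, u p i - v p i \is a Num.int) -> pi u = pi v.
Proof.
move=> Fu Fv uvZ; have Fw := FdomD Fu (FdomZ (-1) Fv).
have -> : u = Fadd v (Fadd u (Fscale (-1) v)).
  by apply: funext => p; apply: funext => i; rewrite /Fadd /Fscale mulN1r addrC subrK.
by rewrite pi_add // (pi_int Fw) ?addr0 // => p i; rewrite /Fadd /Fscale mulN1r.
Qed.

Lemma pi_sum (I : Type) (r : seq I) (a : I -> int) (V : I -> nat -> nat -> rat) :
  (forall k, Fdom n (V k)) ->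
  Fdom n (fun p i => \sum_(k <- r) (a k)%:~R * V k p i) /\
  pi (fun p i => \sum_(k <- r) (a k)%:~R * V k p i) = \sum_(k <- r) pi (V k) *~ a k.
Proof.
move=> FV; elim: r => [|k r [IHF IHpi]].
  have -> : (fun p i => \sum_(k <- [::]) (a k)%:~R * V k p i) = fun _ _ => 0.
    by apply: funext => p; apply: funext => i; rewrite big_nil.
  by rewrite big_nil; split; [apply: Fdom0 | apply: pi_int Fdom0 _ => *; apply: rpred0].
have -> : (fun p i => \sum_(j <- k :: r) (a j)%:~R * V j p i) =
    Fadd (Fscale (a k) (V k)) (fun p i => \sum_(j <- r) (a j)%:~R * V j p i).
  by apply: funext => p; apply: funext => i; rewrite big_cons.
have FVk := FdomZ (a k) (FV k).
by rewrite pi_add // pi_Fscale // IHpi big_cons; split; first exact: FdomD.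
Qed.

Lemma clear_denominators u (P : pred nat) : Fdom n u ->
  exists m : nat, [/\ (0 < m)%N, (forall q i, P q -> m%:R * u q i \is a Num.int)
     & (forall p, prime p -> ~~ P p -> coprime m p)].
Proof.
case=> Pu Su [N FN].
exists (\prod_(q < N | P q) \prod_(i < n q) `|denq (u q i)|)%N; split.
- by apply: prodn_gt0 => q; apply: prodn_gt0 => i; rewrite absz_gt0 denq_neq0.
- move=> q i Pq; case: (ltnP q N) => qN; last by rewrite FN // mulr0 rpred0.
  case: (ltnP i (n q)) => iq; last by rewrite Su ?mulr0 ?rpred0 //; right.
  rewrite mulrC; apply: mulr_den_int.
  rewrite (bigD1 (Ordinal qN)) //= (bigD1 (Ordinal iq)) //= -mulnA.
  exact: dvdn_mulr.
- move=> p p_pr nPp; elim/big_ind: _ => [|x y|q Pq]; first exact: coprime1n.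
    by rewrite coprimeMl => -> ->.
  elim/big_ind: _ => [|x y|i _]; first exact: coprime1n.
    by rewrite coprimeMl => -> ->.
  have [q_pr|nq] := boolP (prime q); last by rewrite Su ?coprime1n //; left.
  case: (Pu q i) => k ->; apply: coprimeXl.
  by rewrite prime_coprime // dvdn_prime2 //; apply: contraNneq nPp => <-.
Qed.

Lemma model_torsion u : Fdom n u -> exists2 m, (0 < m)%N & pi u *+ m = 0.
Proof.
move=> Fu; have [m [m_gt0 mZ _]] := clear_denominators predT Fu.
exists m => //; rewrite pmulrn -pi_Fscale //.
by apply: pi_int => [|p i]; [apply: FdomZ | rewrite /Fscale -pmulrn mZ].
Qed.

Lemma model_divisible u p : prime p -> Fdom n u -> exists2 v, Fdom n v & pi v *+ p = pi u.
Proof.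
move=> p_pr Fu; case: (Fu) => Pu Su [N FN].
have /choice[v vP] : forall qi : nat * nat, exists y, [/\ padic_rat qi.1 y,
    p%:R * y - u qi.1 qi.2 \is a Num.int & (u qi.1 qi.2 = 0 -> y = 0)].
  case=> q i /=; have [u0|u0] := eqVneq (u q i) 0.
    exists 0; rewrite u0 mulr0 subrr rpred0.
    by split=> //; apply: padic_rat_int; rewrite rpred0.
  have q_pr : prime q by apply: contraNT u0 => nq; apply/eqP; apply: Su; left.
  have [y y_q yE] := padic_rat_div_prime p_pr q_pr (Pu q i).
  by exists y; split=> // /eqP; rewrite (negbTE u0).
have Fv : Fdom n (fun q i => v (q, i)).
  split=> [q i|q i qi|]; first by case: (vP (q, i)).
    by case: (vP (q, i)) => _ _ -> //=; apply: Su.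
  by exists N => q i qN; case: (vP (q, i)) => _ _ -> //=; apply: FN.
exists (fun q i => v (q, i)) => //; rewrite pmulrn -pi_Fscale //.
apply: pi_eq_int => [|//|q i]; first exact: FdomZ.
by rewrite /Fscale -pmulrn; case: (vP (q, i)).
Qed.

Lemma Fdom_basis p j : prime p -> (j < n p)%N -> Fdom n (Fbasis p j).
Proof.
move=> p_pr jn; split=> [q l|q l [nq|lq]|]; rewrite /Fbasis.
- case: andP => [[/eqP -> _]|_]; last by apply: padic_rat_int; rewrite rpred0.
  apply/(padic_ratP _ p_pr); exists 1%N.
  by rewrite expn1 mulVf ?rpred1 // pnatr_eq0 -lt0n prime_gt0.
- by case: andP => // [[/eqP qp _]]; rewrite qp p_pr in nq.
- by case: andP => // [[/eqP qp /eqP lj]]; move: lq; rewrite qp lj leqNgt jn.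
- by exists p.+1 => q l; case: andP => // [[/eqP -> _]]; rewrite ltnn.
Qed.

Lemma model_p_basis p : prime p -> p_independent p (fun j : 'I_(n p) => pi (Fbasis p j)).
Proof.
move=> p_pr a rel j; have FE (k : 'I_(n p)) := Fdom_basis p_pr (ltn_ord k).
have [Fsum piSum] := pi_sum (index_enum 'I_(n p)) a FE.
move: piSum; rewrite rel => /(pi_ker Fsum)/(_ p j)/eqP; rewrite -Qint_def.
rewrite (bigD1 j) //= big1 => [|k /negbTE kj]; last first.
  rewrite /Fbasis eqxx /=; case: eqP => [/ord_inj jk|_]; last by rewrite mulr0.
  by rewrite jk eqxx in kj.
rewrite /Fbasis !eqxx addr0 => /intrP[w wE]; apply/dvdzP; exists w.
apply/eqP; rewrite -(eqr_int rat) intrM -wE -[p%:Z%:~R]/(p%:R) mulfVK //.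
by rewrite pnatr_eq0 -lt0n prime_gt0.
Qed.

Lemma model_p_part u p : prime p -> Fdom n u -> exists m u', [/\ coprime m p, Fdom n u',
  forall q i, q != p -> u' q i = 0 & pi u' = pi u *+ m].
Proof.
move=> p_pr Fu; have [m [_ mZ mcop]] := clear_denominators (fun q => q != p) Fu.
pose u' q i := if q == p then m%:R * u q i else 0.
case: (Fu) => Pu Su [N FN].
have Fu' : Fdom n u'.
  split=> [q i|q i qi|]; rewrite /u'.
  - case: eqP => [->|_]; last by apply: padic_rat_int; rewrite rpred0.
    by rewrite -[m%:R]/(m%:Z%:~R); apply: padic_ratMz.
  - by rewrite Su // mulr0 if_same.
  - by exists N => q i qN; rewrite FN // mulr0 if_same.
exists m, u'; split=> //; first by apply: mcop; rewrite ?eqxx.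
  by move=> q i /negbTE qp; rewrite /u' qp.
rewrite pmulrn -pi_Fscale //.
apply: pi_eq_int => // [|q i]; first exact: FdomZ.
rewrite /u' /Fscale -pmulrn; case: eqP => [_|/eqP qp]; first by rewrite subrr rpred0.
by rewrite sub0r rpredN mZ.
Qed.

(* Clear the denominators prime to [p]; the [p]-coordinates of [n p + 1] vectors
   then satisfy a rational, hence a [p]-primitive integral, relation. *)
Lemma model_p_rank p : prime p -> forall v : 'I_(n p).+1 -> D, ~ p_independent p v.
Proof.
move=> p_pr v ind.
have [u uP] := fin_all_exists (fun k => pi_surj (v k)).
have [m mP] := fin_all_exists (fun k => model_p_part p_pr (uP k).1).
have [u' u'P] := fin_all_exists mP.
pose X := \matrix_(k < (n p).+1, l < n p) u' k p l.
have [b rel [k0 ndvd]] := rat_rows_p_dependent X p_pr (ltnSn (n p)).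
have Fu' k : Fdom n (u' k) by case: (u'P k).
have [Fsum piSum] := pi_sum (index_enum 'I_(n p).+1) b Fu'.
have rel_all q l : \sum_k (b k)%:~R * u' k q l = 0.
  have [->|qp] := eqVneq q p; last first.
    by apply: big1 => k _; case: (u'P k) => _ _ -> //; rewrite mulr0.
  have [ln|nl] := ltnP l (n p).
    by rewrite -[RHS](rel (Ordinal ln)); apply: eq_bigr => k _; rewrite mxE.
  by apply: big1 => k _; case: (Fu' k) => _ -> //; [rewrite mulr0 | right].
have sum0 : \sum_k v k *~ ((m k)%:Z * b k) = 0.
  rewrite -[RHS](pi_int Fsum) => [|q l]; last by rewrite rel_all rpred0.
  rewrite piSum; apply: eq_bigr => k _; case: (u'P k) => _ _ _ ->.
  by rewrite (uP k).2 mulrzA -pmulrn.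
case: (u'P k0) => mcop _ _ _.
have := ind _ sum0 k0; rewrite dvdzE abszM Euclid_dvdM // => /orP[pm|pb].
  by move: mcop; rewrite coprime_sym prime_coprime // pm.
by move: ndvd; rewrite dvdzE pb.
Qed.

End Model.

Lemma std_torsion (D : zmodType) : StdDivisible D -> torsion D.
Proof.
move=> [n [pi [pi_add pi_surj pi_ker]]] d; have [u [Fu <-]] := pi_surj d.
exact: (model_torsion pi_add pi_ker Fu).
Qed.

Lemma std_divisible (D : zmodType) : StdDivisible D -> divisible (@setT D).
Proof.
move=> [n [pi [pi_add pi_surj pi_ker]]] d p p_pr _; have [u [Fu <-]] := pi_surj d.
by have [v _ vE] := model_divisible pi_add pi_ker p_pr Fu; exists (pi v).
Qed.

Lemma std_finite_p_ranks (D : zmodType) : StdDivisible D -> finite_p_ranks D.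
Proof.
move=> [n [pi [pi_add pi_surj pi_ker]]] p p_pr; exists (n p), (fun j => pi (Fbasis p j)).
have := model_p_rank pi_add pi_surj pi_ker p_pr.
by have := model_p_basis pi_add pi_ker p_pr.
Qed.

Section PairInjections.
Variables U V : zmodType.

Definition pairl (u : U) : U * V := (u, 0).
Definition pairr (v : V) : U * V := (0, v).

Fact pairl_is_zmod_morphism : zmod_morphism pairl.
Proof. by move=> x y; rewrite /pairl -[RHS]/(x - y, 0 - 0) subr0. Qed.
HB.instance Definition _ :=
  GRing.isZmodMorphism.Build U (U * V)%type pairl pairl_is_zmod_morphism.

Fact pairr_is_zmod_morphism : zmod_morphism pairr.
Proof. by move=> x y; rewrite /pairr -[RHS]/(0 - 0, x - y) subr0. Qed.
HB.instance Definition _ :=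
  GRing.isZmodMorphism.Build V (U * V)%type pairr pairr_is_zmod_morphism.

Lemma pairlr (x : U * V) : x = pairl x.1 + pairr x.2.
Proof. by case: x => u v; rewrite /pairl /pairr -[RHS]/(u + 0, 0 + v) addr0 add0r. Qed.

End PairInjections.
Arguments pairl {U} V u.
Arguments pairr U {V} v.

Section ProductComplement.
Variables (B D Q : zmodType) (pi f : {additive B * D -> Q}) (r : {additive Q -> B * D}).
Hypotheses (bassB : Bassian B) (D_divisible : divisible (@setT D)) (D_torsion : torsion D).
Hypothesis D_ranks : finite_p_ranks D.
Hypotheses (pi_surj : forall q, exists x, pi x = q) (f_inj : injective f) (fK : cancel f r).

Let hom_DB0 (g : {additive D -> B}) d : g d = 0 :=
  bassian_hom_divisible_torsion g bassB D_divisible D_torsion d.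

Let s : {additive B -> B} := fst \o r \o pi \o pairl D.

Let r_pi_fst x : (r (pi x)).1 = s x.1.
Proof.
rewrite {1}[x]pairlr !raddfD /=.
by have /= -> := hom_DB0 (fst \o r \o pi \o pairr B) x.2; rewrite addr0.
Qed.

Let s_inj : forall b, s b = 0 -> b = 0.
Proof.
apply: (bassian_surj_inj bassB) => b'; have [x xE] := pi_surj (f (pairl D b')).
by exists x.1; rewrite -r_pi_fst xE fK.
Qed.

Lemma ker_pi_fst x : pi x = 0 -> x.1 = 0.
Proof. by move=> pix0; apply: s_inj; rewrite -r_pi_fst pix0 !raddf0. Qed.

Lemma f_pairr_in_pi_pairr d : exists d', f (pairr B d) = pi (pairr B d').
Proof.
pose sec q := projT1 (cid (pi_surj q)).
have secK q : pi (sec q) = q := projT2 (cid (pi_surj q)).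
have secB : zmod_morphism (fun q => (sec q).1).
  move=> a b; apply/eqP; rewrite -subr_eq0 -!raddfB; apply/eqP; apply: ker_pi_fst.
  by rewrite raddfB (raddfB pi) !secK subrr.
have [sec1 sec1E] := additiveP secB.
have sec10 := hom_DB0 (sec1 \o f \o pairr B) d.
exists (sec (f (pairr B d))).2; rewrite -{1}[f _]secK {1}[sec _]pairlr.
by move: sec10; rewrite /= -sec1E => ->; rewrite raddf0 add0r.
Qed.

Lemma pi_pairr_in_f_pairr d : exists d', pi (pairr B d) = f (pairr B d').
Proof.
have f_inj' : injective (f \o pairr B) by move=> a b /f_inj /(congr1 snd).
exact: (@im_sub_im_of_inj _ _ (pi \o pairr B) _ D_divisible D_torsion D_ranks
  f_inj' f_pairr_in_pi_pairr).
Qed.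

Lemma r_ker_sub_f_im q : (r q).1 = 0 -> exists x, q = f x.
Proof.
have [x <-] := pi_surj q; rewrite r_pi_fst => /s_inj x1.
have [d' d'E] := pi_pairr_in_f_pairr x.2.
by exists (pairr B d'); rewrite -d'E {1}[x]pairlr x1 raddf0 add0r.
Qed.

End ProductComplement.

Lemma RelHopfian_prod (B D : zmodType) :
  Bassian B -> StdDivisible D -> RelHopfian (B * D)%type.
Proof.
move=> bassB stdD Q pi f C pi_surj f_inj C0 CB [c [cC c0]] dec dir x _; exfalso.
have [r [fK rC]] := complement_retraction f_inj C0 CB dec dir.
have [y cE] : exists y, c = f y.
  apply: (r_ker_sub_f_im bassB (std_divisible stdD) (std_torsion stdD)
    (std_finite_p_ranks stdD) pi_surj f_inj fK).
  by rewrite rC.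
by apply: c0; rewrite cE dir // -cE.
Qed.

Lemma RelHopfian_bij (G H : zmodType) (phi : {additive G -> H}) :
  bijective phi -> RelHopfian H -> RelHopfian G.
Proof.
case=> psi phiK psiK relH Q pi f C pi_surj f_inj C0 CB C_nz dec dir x pix0.
have psiB : zmod_morphism psi by move=> a b; apply: (can_inj phiK); rewrite raddfB !psiK.
have [psi' psiE] := additiveP psiB; rewrite {}psiE in phiK psiK.
have psi'_inj := can_inj psiK.
rewrite -[x]phiK (_ : phi x = 0) ?raddf0 //.
apply: (relH Q (pi \o psi') (f \o psi') C) => //=.
- by move=> q; have [y <-] := pi_surj q; exists (phi y); rewrite /= phiK.
- by move=> a b /f_inj /psi'_inj.
- by move=> q; have [y [c [cC ->]]] := dec q; exists (phi y), c; rewrite /= phiK.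
- by move=> y /dir.
- by rewrite phiK.
Qed.

Theorem proposition4p1 (G : zmodType) : ExtBassian G -> RelHopfian G.
Proof.
move=> [B [D [phi [phi_bij bassB stdD]]]].
exact: RelHopfian_bij phi_bij (RelHopfian_prod bassB stdD).
Qed.
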